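(* Let $\Sigma$ be a graded alphabet and $t\in T_\Sigma$. Then the subtree automaton $A_t$ of $t$ realizes the subtree series of $t$: $\mathbb{P}_{A_t}=\mathrm{SubTreeSeries}_t$.
   Context: A graded alphabet is a finite set $\Sigma=\bigcup_{k\in\mathbb{N}}\Sigma_k$; $T_\Sigma$ is the set of trees $f(t_1,\ldots,t_k)$ with $f\in\Sigma_k$. Weights are in the monoid $(\mathbb{N},+)$. A RWTA is $A=(\Sigma,Q,\nu,\delta)$ with $Q$ finite, $\nu:Q\to\mathbb{N}$, $\delta\subseteq\bigcup_k Q\times\Sigma_k\times Q^k$; $\delta(f,q_1,\ldots,q_k)=\{q\mid(q,f,q_1,\ldots,q_k)\in\delta\}$, extended to subsets by union over tuples; $\nu(S)=\sum_{s\in S}\nu(s)$; $\Delta(f(t_1,\ldots,t_k))=\delta(f,\Delta(t_1),\ldots,\Delta(t_k))$; $\mathbb{P}_A(t)=\nu(\Delta(t))$. For $t=f(t_1,\ldots,t_k)$, $\mathrm{SubTree}(t)=\{t\}\cup\bigcup_j\mathrm{SubTree}(t_j)$, and $\mathrm{SubTreeSeries}_t:T_\Sigma\to\mathbb{N}$ is defined inductively by $\mathrm{SubTreeSeries}_t=t+\sum_{1\le j\le k}\mathrm{SubTreeSeries}_{t_j}$ (i.e. $\mathrm{SubTreeSeries}_t(s)$ is the number of nodes of $t$ at which the subtree rooted there equals $s$). The tree $t^\sharp$ is obtained from $t$ by indexing each symbol occurrence with its position in a prefix (preorder) traversal, so all indexed symbols are distinct and keep their arity; $\Sigma_{t^\sharp}$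 is the set of indexed symbols occurring in $t^\sharp$, and $\mathrm{h}$ erases indices ($\mathrm{h}(t^\sharp)=t$). The subtree automaton of $t$ is $A_t=(\Sigma,Q,\nu,\delta)$ with $Q=\mathrm{SubTree}(t^\sharp)$, $\nu(q)=1$ for all $q\in Q$, and for $f\in\Sigma_{t^\sharp}$ of arity $k$ and $t_1,\ldots,t_{k+1}\in Q$: $t_{k+1}\in\delta(\mathrm{h}(f),t_1,\ldots,t_k)$ iff $t_{k+1}=f(t_1,\ldots,t_k)$. *)

From HB Require Import structures.
From mathcomp Require Import all_boot.
Set Implicit Arguments. Unset Strict Implicit. Unset Printing Implicit Defensive.

Inductive tree (S : Type) : Type := Node of S & seq (tree S).
Arguments Node {S}.

Section TreeCount.
Variable T : countType.

Fixpoint tree_enc (t : tree T) : GenTree.tree T :=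
  match t with Node x ts => GenTree.Node 0 (GenTree.Leaf x :: map tree_enc ts) end.

Fixpoint tree_dec (g : GenTree.tree T) : option (tree T) :=
  match g with
  | GenTree.Node _ (GenTree.Leaf x :: cs) => Some (Node x (pmap tree_dec cs))
  | _ => None
  end.

Lemma tree_encK : pcancel tree_enc tree_dec.
Proof.
rewrite /pcancel; fix IH 1; case=> x ts /=; congr (Some (Node x _)).
elim: ts => //= u us IHus; rewrite IH /= IHus //.
Qed.
End TreeCount.

HB.instance Definition _ (T : countType) := Countable.copy (tree T) (pcan_type (@tree_encK T)).

Definition root (S : Type) (t : tree S) : S := let: Node x _ := t in x.

(* Graded alphabet: finite Sigma with arity function ar. T_Sigma = wf trees. *)
Fixpoint wf (Sigma : Type) (ar : Sigma -> nat) (t : tree Sigma) : bool :=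
  match t with Node f ts => (size ts == ar f) && all (wf ar) ts end.

Record rwta (Sigma : Type) := RWTA {
  state : finType;
  nu : state -> nat;
  (* delta q f [q1;...;qk] <-> (q, f, q1, ..., qk) \in delta *)
  delta : state -> Sigma -> seq state -> bool }.

Definition deltaS (Sigma : Type) (A : rwta Sigma) (f : Sigma)
  (Ss : seq {set state A}) : {set state A} :=
  [set q | [exists qs : (size Ss).-tuple (state A),
             all2 (fun (qi : state A) (Si : {set state A}) => qi \in Si) qs Ss && @delta Sigma A q f qs]].

Fixpoint Delta (Sigma : Type) (A : rwta Sigma) (t : tree Sigma) : {set state A} :=
  match t with Node f ts => @deltaS Sigma A f (map (@Delta Sigma A) ts) end.

Definition nuS (Sigma : Type) (A : rwta Sigma) (S : {set state A}) : nat :=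
  \sum_(q in S) @nu Sigma A q.

Definition realized (Sigma : Type) (A : rwta Sigma) (t : tree Sigma) : nat :=
  @nuS Sigma A (@Delta Sigma A t).

Fixpoint subtrees (S : Type) (t : tree S) : seq (tree S) :=
  match t with Node _ ts => t :: flatten (map (@subtrees S) ts) end.

Fixpoint SubTreeSeries (S : countType) (t : tree S) (s : tree S) : nat :=
  match t with Node _ ts => (t == s) + sumn (map (fun u => SubTreeSeries u s) ts) end.

(* t# : each symbol indexed by its position in a preorder traversal (from 0) *)
Fixpoint sharp_aux (S : Type) (n : nat) (t : tree S) : tree (S * nat) * nat :=
  match t with
  | Node f ts =>
    let fix go (m : nat) (us : seq (tree S)) : seq (tree (S * nat)) * nat :=
      match us with
      | [::] => ([::], m)
      | u :: us' => let (u', m1) := sharp_aux m u in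
                    let (us'', m2) := go m1 us' in (u' :: us'', m2)
      end in
    let (ts', m) := go n.+1 ts in (Node (f, n) ts', m)
  end.

Definition sharp (S : Type) (t : tree S) : tree (S * nat) := (sharp_aux 0 t).1.

Fixpoint h (S : Type) (t : tree (S * nat)) : tree S :=
  match t with Node f ts => Node f.1 (map (@h S) ts) end.

Definition symbols (S : Type) (t : tree S) : seq S := map (@root S) (subtrees t).

Definition subtree_aut (Sigma : finType) (ar : Sigma -> nat) (t : tree Sigma)
  : rwta Sigma :=
  let Q := seq_sub (subtrees (sharp t)) in
  @RWTA Sigma Q (fun _ => 1)
    (fun (q : Q) (g : Sigma) (qs : seq Q) =>
       let f := root (val q) in
       [&& f \in symbols (sharp t), f.1 == g, size qs == ar f.1
         & val q == Node f (map val qs)]).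

(** Indexing makes all subtrees of [t#] pairwise distinct, so the states of
    [A_t] are exactly the occurrences of subtrees in [t], and erasing indices
    maps the subtrees of [t#] onto those of [t] with multiplicity.  By
    induction on [s], [Delta s] is the set of occurrences whose erasure is [s];
    every state has weight 1, so [P_{A_t}(s)] counts these occurrences, which
    is [SubTreeSeries_t(s)]. *)

From Pilot Require Import Defs.
From HB Require Import structures.
From mathcomp Require Import all_boot.
From mathcomp Require Import zify.
Set Implicit Arguments.
Unset Strict Implicit.

Lemma tree_ind_in (S : countType) (P : tree S -> Prop) :
  (forall f ts, (forall u, u \in ts -> P u) -> P (Node f ts)) -> forall t, P t.
Proof.
move=> IHnode; fix IH 1; case=> f ts; apply: IHnode.
have: (fix F (l : seq (tree S)) : Prop :=
         if l is u :: l' then P u /\ F l' else True) ts.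
  by elim: ts => [|u us IHus] /=; [exact: I | split; [exact: IH | exact: IHus]].
clear IH; elim: ts => //= u us IHus [Pu Pus] v; rewrite inE.
by case: eqP => [->|_ /IHus] //; apply.
Qed.

Section Subtrees.
Variable S : countType.

Lemma count_subtrees (t s : tree S) :
  SubTreeSeries t s = count (pred1 s) (subtrees t).
Proof.
elim/tree_ind_in: t => f ts IH /=; rewrite eq_sym; congr (_ + _).
rewrite count_flatten -map_comp; congr sumn.
by apply/eq_in_map => u /IH.
Qed.

Lemma subtrees_trans (u v : tree S) :
  v \in subtrees u -> {subset subtrees v <= subtrees u}.
Proof.
elim/tree_ind_in: u v => f ts IH v /=; rewrite inE => /orP[/eqP -> //|].
case/flattenP=> _ /mapP[c c_ts ->] v_c x x_v.
rewrite inE; apply/orP; right; apply/flattenP; exists (subtrees c).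
  exact: map_f.
exact: IH v_c x x_v.
Qed.

Lemma children_in_subtrees (u : tree S) f cs :
  Node f cs \in subtrees u -> {subset cs <= subtrees u}.
Proof.
move=> fcs_u c c_cs; apply: (subtrees_trans fcs_u (x := c)) => /=.
rewrite inE; apply/orP; right; apply/flattenP; exists (subtrees c).
  exact: map_f.
by case: c {c_cs} => ? ? /=; rewrite mem_head.
Qed.

Lemma map_h_subtrees (u : tree (S * nat)) :
  map (@h S) (subtrees u) = subtrees (h u).
Proof.
elim/tree_ind_in: u => f ts IH /=; congr (_ :: _).
rewrite map_flatten -!map_comp; congr flatten.
by apply/eq_in_map => v /IH.
Qed.

End Subtrees.

Section Sharp.
Variable S : Type.

(* The local [fix] of [sharp_aux], lifted to the top level to reason about it. *)
Fixpoint sharp_forest (m : nat) (us : seq (tree S)) : seq (tree (S * nat)) * nat :=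
  match us with
  | [::] => ([::], m)
  | u :: us' => let (u', m1) := sharp_aux m u in
                let (us'', m2) := sharp_forest m1 us' in (u' :: us'', m2)
  end.

Lemma sharp_aux_Node n f (ts : seq (tree S)) :
  sharp_aux n (Node f ts) =
  let (ts', m) := sharp_forest n.+1 ts in (Node (f, n) ts', m).
Proof.
rewrite /=; lazymatch goal with |- context [?go n.+1 ts] =>
  suff -> : go n.+1 ts = sharp_forest n.+1 ts by [] end.
by elim: ts n.+1 => //= u us IH m; case: (sharp_aux m u) => u' m1; rewrite IH.
Qed.

Definition index_of (x : tree (S * nat)) : nat := (Defs.root x).2.

End Sharp.

Section SharpSpec.
Variable S : countType.

Lemma sharp_aux_spec (t : tree S) n :
  let: (u, m) := sharp_aux n t in
  [/\ h u = t, map (@index_of S) (subtrees u) = iota n (m - n) & n < m].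
Proof.
elim/tree_ind_in: t n => f ts IH n; rewrite sharp_aux_Node.
have forest_spec m : let: (us, m') := sharp_forest m ts in
  [/\ map (@h S) us = ts,
      flatten (map (fun u => map (@index_of S) (subtrees u)) us) = iota m (m' - m)
    & m <= m'].
  elim: ts IH m => [|u us IHus] IH m /=; first by rewrite subnn.
  have := IH u (mem_head _ _) m; case: (sharp_aux m u) => u' m1 [hu iu lt_m].
  have := IHus (fun v v_us => IH v (mem_behead (s := u :: us) v_us)) m1.
  case: (sharp_forest m1 us) => us' m2 [hus ius le_m1] /=.
  rewrite hu hus iu ius; split => //; last by lia.
  rewrite [in iota m1 _](_ : m1 = m + (m1 - m)); last by lia.
  by rewrite -iotaD; congr iota; lia.
have := forest_spec n.+1; case: (sharp_forest n.+1 ts) => ts' m [hts its le_m].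
rewrite /= hts map_flatten -map_comp its; split => //.
by case: m le_m {its} => // m le_m; rewrite subSS subSn.
Qed.

Lemma h_sharp (t : tree S) : h (sharp t) = t.
Proof. by have := sharp_aux_spec t 0; rewrite /sharp; case: sharp_aux => ? ? []. Qed.

Lemma uniq_subtrees_sharp (t : tree S) : uniq (subtrees (sharp t)).
Proof.
have := sharp_aux_spec t 0; rewrite /sharp; case: sharp_aux => u m [_ iu _].
by apply: (map_uniq (f := @index_of S)); rewrite /= iu iota_uniq.
Qed.

End SharpSpec.

Section SubtreeAutomaton.
Variables (Sigma : finType) (ar : Sigma -> nat) (t : tree Sigma).

Let A := subtree_aut ar t.
Let Q := seq_sub (subtrees (sharp t)).

Definition occurrences (s : tree Sigma) : {set Q} := [set q : Q | h (val q) == s].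

Lemma all2_mem_occurrences (qs : seq Q) ss :
  all2 (fun (q : Q) (X : {set Q}) => q \in X) qs (map occurrences ss)
  = (map (@h Sigma) (map val qs) == ss).
Proof. by elim: qs ss => [|q qs IH] [|u ss] //=; rewrite inE IH eqseq_cons. Qed.

Lemma deltaS_occurrences g ss : size ss = ar g ->
  deltaS (A := A) g (map occurrences ss) = occurrences (Node g ss).
Proof.
move=> size_ss; apply/setP => q; rewrite /deltaS !inE; apply/existsP/eqP.
  case=> qs /andP[]; rewrite all2_mem_occurrences => /eqP h_qs.
  case/and4P=> _ /eqP root_q _ /eqP ->.
  by rewrite /= root_q h_qs.
have q_sub : val q \in subtrees (sharp t) := valP q.
case E: (val q) q_sub => [f cs] q_sub [h_f h_cs].
pose qs : seq Q := [seq insubd q c | c <- cs].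
have val_qs : map val qs = cs.
  rewrite -map_comp -[RHS]map_id; apply/eq_in_map => c c_cs /=.
  by rewrite insubdK // (children_in_subtrees q_sub).
have size_qs : size qs == size (map occurrences ss).
  by rewrite size_map -h_cs -val_qs !size_map.
exists (Tuple size_qs); rewrite /= all2_mem_occurrences val_qs h_cs eqxx /=.
have -> : ssval q = Node f cs := E.
rewrite /= h_f (eqP size_qs) size_map size_ss !eqxx /= andbT.
exact: (map_f (@Defs.root _) q_sub).
Qed.

Lemma Delta_subtree_aut (s : tree Sigma) :
  wf ar s -> Delta A s = occurrences s.
Proof.
elim/tree_ind_in: s => g ss IH /= /andP[/eqP size_ss wf_ss].
suff -> : map (Delta A) ss = map occurrences ss by exact: deltaS_occurrences.
by apply/eq_in_map => u u_ss; apply: IH u_ss (allP wf_ss u u_ss).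
Qed.

Lemma card_occurrences (s : tree Sigma) : #|occurrences s| = SubTreeSeries t s.
Proof.
rewrite count_subtrees.
have -> : subtrees t = map (@h _) (subtrees (sharp t)).
  by rewrite map_h_subtrees h_sharp.
rewrite count_map cardsE cardE size_filter.
have enum_Q : map val (enum {: Q}) = subtrees (sharp t).
  by rewrite enumT unlock val_seq_sub_enum // uniq_subtrees_sharp.
by rewrite -[in RHS]enum_Q count_map enumT.
Qed.

End SubtreeAutomaton.

Theorem lemma6 (Sigma : finType) (ar : Sigma -> nat) (t : tree Sigma) :
  wf ar t ->
  forall s : tree Sigma, wf ar s ->
    realized (subtree_aut ar t) s = SubTreeSeries t s.
Proof.
move=> _ s wf_s.
by rewrite /realized Delta_subtree_aut // /nuS sum1_card card_occurrences.
Qed.
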